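(* Consider a $k$-armed Bernoulli bandit in which the reward of arm $a\in\{1,\dots,k\}$ is distributed as $\mathrm{Bernoulli}(\theta_a)$ with unknown $\theta_a\in[0,1]$, and consider the stochastic-dominance Thompson sampling algorithm (SD\_TS) described below. Let $D$ denote the total variation distance. Then SD\_TS is $(2,0,0)$-subjectively fair with respect to $D$; that is, with probability $1$, for every round $t$ and every pair of arms $i,j$, $$D(\pi_t(i)\,\|\,\pi_t(j)) \le 2\, D(r_i(h^t)\,\|\,r_j(h^t)).$$
   Context: Algorithm SD\_TS: for each arm $a$ initialise $S_a=F_a=1/2$. In each round $t=1,2,\dots$: for each arm $a$, sample $\theta_a(t)\sim\mathrm{Beta}(S_a,F_a)$, then sample $\tilde r_a(t)\sim\mathrm{Bernoulli}(\theta_a(t))$; play $a_t=\arg\max_a \tilde r_a(t)$ (ties broken uniformly at random); observe the true reward $r_{a_t}(t)$ of the played arm and set $S_{a_t}\leftarrow S_{a_t}+1$ if $r_{a_t}(t)=1$, else $F_{a_t}\leftarrow F_{a_t}+1$. Notation: $h^t=(a_1,r_{a_1}(1),\dots,a_t,r_{a_t}(t))$ is the history; $\pi_t(i)$ is the probability (given the history) that the algorithm plays arm $i$ in round $t$. The decision maker's initial belief is the uninformed prior $\mathrm{Beta}(1/2,1/2)$ on each $\theta_i$, with posterior $\beta(\theta_i\mid h^t)$; the marginal (posterior predictive) reward distribution of arm $i$ is $r_i(h^t)=\int P(r_i\mid\theta_i)\,d\beta(\theta_i\mid h^t)$. For numbers $p,q\in[0,1]$, $D(p\|q)$ denotes the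 divergence between the Bernoulli distributions with parameters $p$ and $q$. Definition: a bandit process is $(\epsilon_1,\epsilon_2,\delta)$-subjectively fair w.r.t. a divergence $D$ ($\epsilon_1,\epsilon_2\ge0$, $0\le\delta\le1$) if with probability at least $1-\delta$, for every round $t$ and every pair of arms $i,j$, $D(\pi_t(i)\|\pi_t(j))\le \epsilon_1 D(r_i(h^t)\|r_j(h^t))+\epsilon_2$. *)

From HB Require Import structures.
From mathcomp Require Import all_boot all_order all_algebra.
From mathcomp Require Import all_classical all_reals all_analysis.
Set Implicit Arguments. Unset Strict Implicit. Unset Printing Implicit Defensive.
Import Order.TTheory GRing.Theory Num.Theory.
Local Open Scope ring_scope.
Local Open Scope classical_set_scope.

(* A history h^t of a k-armed Bernoulli bandit: the sequence of
   (played arm, observed reward) pairs, reward true = 1, false = 0. *)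
Definition history (k : nat) := seq ('I_k * bool).

Definition nsucc (k : nat) (h : history k) (a : 'I_k) : nat :=
  count (fun p => (p.1 == a) && p.2) h.
Definition nfail (k : nat) (h : history k) (a : 'I_k) : nat :=
  count (fun p => (p.1 == a) && ~~ p.2) h.

Section Defs.
Variable R : realType.

Definition S_par k (h : history k) (a : 'I_k) : R := 2^-1 + (nsucc h a)%:R.
Definition F_par k (h : history k) (a : 'I_k) : R := 2^-1 + (nfail h a)%:R.

(* (unnormalised) Beta(s,f) density on ]0,1[ *)
Definition beta_dens (s f : R) (x : R) : R := x `^ (s - 1) * (1 - x) `^ (f - 1).

(* Probability that  r ~ Bernoulli(theta)  equals 1 when  theta ~ Beta(s,f):
   \int theta dBeta(s,f)(theta). *)
Definition beta_bern_prob (s f : R) : R :=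
  Rintegral lebesgue_measure `]0, 1[ (fun x => x * beta_dens s f x) /
  Rintegral lebesgue_measure `]0, 1[ (beta_dens s f).

(* Probability that arm a's sampled reward  tilde r_a(t)  equals 1 under SD_TS. *)
Definition sdts_sample_prob k (h : history k) (a : 'I_k) : R :=
  beta_bern_prob (S_par h a) (F_par h a).

Definition argmax_arms k (x : {ffun 'I_k -> bool}) : {set 'I_k} :=
  [set a | [forall b, ((x b : nat) <= (x a : nat))%N]].

(* pi_t(i): probability (given the history) that SD_TS plays arm i:
   the sampled rewards are independent across arms; ties broken uniformly. *)
Definition sdts_pi k (h : history k) (i : 'I_k) : R :=
  \sum_(x : {ffun 'I_k -> bool})
     (\prod_(a : 'I_k) (if x a then sdts_sample_prob h a
                        else 1 - sdts_sample_prob h a)) *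
     (if i \in argmax_arms x then (#|argmax_arms x|%:R)^-1 else 0).

(* Decision maker: uninformed prior Beta(1/2,1/2) (normalising constant
   cancels), Bernoulli likelihood, posterior beta(theta | h). *)
Definition prior_dens (x : R) : R := x `^ (- 2^-1) * (1 - x) `^ (- 2^-1).
Definition likelihood k (h : history k) (a : 'I_k) (x : R) : R :=
  x ^+ nsucc h a * (1 - x) ^+ nfail h a.

(* r_i(h): posterior predictive probability that arm i's reward is 1,
   i.e. \int P(r_i = 1 | theta) d beta(theta | h) with P(r_i=1|theta)=theta. *)
Definition post_pred k (h : history k) (a : 'I_k) : R :=
  Rintegral lebesgue_measure `]0, 1[
     (fun x => x * (prior_dens x * likelihood h a x)) /
  Rintegral lebesgue_measure `]0, 1[
     (fun x => prior_dens x * likelihood h a x).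

Definition tv_bern (p q : R) : R := (`|p - q| + `|(1 - p) - (1 - q)|) / 2.

End Defs.

(* SD_TS samples each arm's reward from a Beta(1/2 + S, 1/2 + F) posterior,
   which is exactly the decision maker's posterior under the Beta(1/2,1/2)
   prior; hence the probability q_a that arm a samples reward 1 is its
   posterior predictive r_a(h).  It remains to see that playing the argmax of
   independent Bernoulli(q_a) samples is 1-Lipschitz in the q_a:
   swapping the samples of arms i and j maps the profiles where i is played
   onto those where j is played, and the two profiles only differ in
   probability when i wins and j loses, by exactly (q_i - q_j) times the
   probability of the other arms' samples. *)
From HB Require Import structures.
From mathcomp Require Import all_boot all_order all_algebra all_fingroup.
From mathcomp Require Import all_classical all_reals all_analysis.
From mathcomp Require Import ring lra.
Set Implicit Arguments. Unset Strict Implicit. Unset Printing Implicit Defensive.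
Import Order.TTheory GRing.Theory Num.Theory.
Local Open Scope ring_scope.

Section PlayProb.
Variables (R : numFieldType) (k : nat).
Implicit Types (x : {ffun 'I_k -> bool}) (i j a : 'I_k).

Definition tie_share i x : R :=
  if i \in argmax_arms x then (#|argmax_arms x|%:R)^-1 else 0.

Lemma tie_share_ge0 i x : 0 <= tie_share i x.
Proof. by rewrite /tie_share; case: ifP => // _; rewrite invr_ge0 ler0n. Qed.

Lemma tie_share_le1 i x : tie_share i x <= 1.
Proof.
rewrite /tie_share; case: ifP => // iwin.
have card_gt0 : (0 < #|argmax_arms x|)%N by apply/card_gt0P; exists i.
by rewrite invf_le1 ?ler1n // ltr0n.
Qed.

Lemma tie_share_eq0 i j x : x j -> ~~ x i -> tie_share i x = 0.
Proof.
move=> xj xi; rewrite /tie_share inE.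
by case: forallP => // /(_ j); rewrite xj (negbTE xi).
Qed.

Definition swap_arms i j x : {ffun 'I_k -> bool} := [ffun a => x (tperm i j a)].

Lemma swap_armsK i j : involutive (swap_arms i j).
Proof. by move=> x; apply/ffunP => a; rewrite !ffunE tpermK. Qed.

Lemma swap_arms_id i j x : x i = x j -> swap_arms i j x = x.
Proof. by move=> xij; apply/ffunP => a; rewrite ffunE; case: tpermP => [->|->|]. Qed.

Lemma argmax_arms_swap i j x :
  argmax_arms (swap_arms i j x) = tperm i j @^-1: argmax_arms x.
Proof.
apply/setP => a; rewrite !inE; apply/forallP/forallP => winner b.
  by have := winner (tperm i j b); rewrite !ffunE tpermK.
by rewrite !ffunE; apply: winner.
Qed.

Lemma tie_share_swap i j x : tie_share j (swap_arms i j x) = tie_share i x.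
Proof.
rewrite /tie_share argmax_arms_swap card_preimset; last exact: perm_inj.
by rewrite inE tpermR.
Qed.

Variable q : 'I_k -> R.

Definition outcome_prob a (b : bool) : R := if b then q a else 1 - q a.

Definition profile_prob x : R := \prod_a outcome_prob a (x a).

Definition play_prob i : R := \sum_x profile_prob x * tie_share i x.

(* [pinned_prob i j] is the law of the sample profile conditioned on arm [i]
   sampling 1 and arm [j] sampling 0. *)
Definition pinned_outcome i j a (b : bool) : R :=
  if a == i then (b : nat)%:R else if a == j then (~~ b : nat)%:R
  else outcome_prob a b.

Definition pinned_prob i j x : R := \prod_a pinned_outcome i j a (x a).

Lemma sum_pinned_prob i j : \sum_x pinned_prob i j x = 1.
Proof.
rewrite /pinned_prob -(bigA_distr_bigA (pinned_outcome i j)) /=.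
rewrite big1 // => a _; rewrite big_bool /pinned_outcome.
case: eqP => _; first by rewrite /= addr0.
by case: eqP => _; rewrite /= ?add0r // /outcome_prob addrC subrK.
Qed.

Lemma prodD2 {i j} (ij : i != j) (F : 'I_k -> R) :
  \prod_a F a = F i * (F j * \prod_(a | (a != i) && (a != j)) F a).
Proof. by rewrite (bigD1 i) //= (bigD1 j) 1?eq_sym //=. Qed.

Lemma profile_prob_swapB i j x : i != j -> x i -> ~~ x j ->
  profile_prob x - profile_prob (swap_arms i j x) = (q i - q j) * pinned_prob i j x.
Proof.
move=> ij xi xj; have ji : j != i by rewrite eq_sym.
rewrite /profile_prob /pinned_prob !(prodD2 ij) !ffunE tpermL tpermR.
rewrite /pinned_outcome eqxx (negbTE ji) eqxx xi (negbTE xj) /= !mul1r.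
set P := \prod_(a | _) outcome_prob a (x a).
have -> : \prod_(a | (a != i) && (a != j)) outcome_prob a (swap_arms i j x a) = P.
  by apply: eq_bigr => a /andP[ai aj]; rewrite ffunE tpermD 1?eq_sym.
have -> : \prod_(a | (a != i) && (a != j)) pinned_outcome i j a (x a) = P.
  by apply: eq_bigr => a /andP[ai aj]; rewrite /pinned_outcome (negbTE ai) (negbTE aj).
by rewrite /outcome_prob; ring.
Qed.

Lemma play_probB i j :
  play_prob i - play_prob j =
  \sum_x (profile_prob x - profile_prob (swap_arms i j x)) * tie_share i x.
Proof.
rewrite /play_prob [in X in _ - X](reindex_inj (can_inj (swap_armsK i j))) /=.
by rewrite -sumrB; apply: eq_bigr => x _; rewrite tie_share_swap mulrBl.
Qed.

Hypothesis q01 : forall a, 0 <= q a <= 1.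

Lemma outcome_prob_ge0 a b : 0 <= outcome_prob a b.
Proof. by have /andP[q0 q1] := q01 a; case: b; rewrite /= ?subr_ge0. Qed.

Lemma pinned_prob_ge0 i j x : 0 <= pinned_prob i j x.
Proof.
apply: prodr_ge0 => a _; rewrite /pinned_outcome.
by do 2?case: eqP => _; rewrite ?ler0n ?outcome_prob_ge0.
Qed.

Lemma norm_profile_prob_swapB i j x : i != j ->
  `|(profile_prob x - profile_prob (swap_arms i j x)) * tie_share i x|
    <= `|q i - q j| * pinned_prob i j x.
Proof.
move=> ij; have pinned0 := pinned_prob_ge0 i j x.
case xi: (x i); case xj: (x j);
  try by rewrite swap_arms_id ?xi ?xj // subrr mul0r normr0 mulr_ge0.
  rewrite profile_prob_swapB ?xi ?xj // -mulrA normrM ler_wpM2l //.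
  rewrite normrM !ger0_norm ?tie_share_ge0 //.
  by rewrite ler_piMr ?tie_share_le1.
by rewrite (@tie_share_eq0 _ j) ?xi ?xj // mulr0 normr0 mulr_ge0.
Qed.

Lemma play_prob_lipschitz i j : `|play_prob i - play_prob j| <= `|q i - q j|.
Proof.
have [<-|ij] := eqVneq i j; first by rewrite !subrr normr0.
rewrite play_probB -[leRHS]mulr1 -(sum_pinned_prob i j) mulr_sumr.
apply: le_trans (ler_norm_sum _ _ _) (ler_sum _ _) => x _.
exact: norm_profile_prob_swapB.
Qed.

End PlayProb.

Lemma tv_bernE (R : realType) (p q : R) : tv_bern p q = `|p - q|.
Proof.
rewrite /tv_bern (_ : (1 - p) - (1 - q) = - (p - q)) ?normrN; first by field.
by ring.
Qed.

Local Open Scope classical_set_scope.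

Section PosteriorPredictive.
Variable R : realType.

Lemma measurable_beta_dens (s f : R) :
  measurable_fun (`]0, 1[ : set R) (beta_dens s f).
Proof.
apply: measurable_realfun.measurable_funM.
  by apply: measurable_funTS; exact: measurable_realfun.measurable_powR.
apply: (measurableT_comp (f := (@powR R)^~ (f - 1)) (g := fun x : R => 1 - x)).
  exact: measurable_realfun.measurable_powR.
exact: measurable_realfun.measurable_funB.
Qed.

(* [fine] sends infinite values to 0, and [x / 0 = 0]. *)
Lemma fine_ratio01 (N D : \bar R) :
  (0 <= N)%E -> (N <= D)%E -> 0 <= fine N / fine D <= 1.
Proof.
case: N => [n| |] //; case: D => [d| |] //=; rewrite ?invr0 ?mulr0 ?lexx ?ler01 //.
rewrite !lee_fin => n0 nd.
have [->|d0] := eqVneq d 0; first by rewrite invr0 mulr0 lexx ler01.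
have dpos : 0 < d by rewrite lt_neqAle eq_sym d0 (le_trans n0 nd).
by rewrite divr_ge0 ?(ltW dpos) //= ler_pdivrMr ?mul1r.
Qed.

Lemma moment_ratio01 (g : R -> R) :
  measurable_fun (`]0, 1[ : set R) g -> (forall x, 0 < x < 1 -> 0 <= g x) ->
  0 <= Rintegral lebesgue_measure `]0, 1[ (fun x => x * g x) /
       Rintegral lebesgue_measure `]0, 1[ g <= 1.
Proof.
move=> mg g0; apply: fine_ratio01.
  apply: integral_ge0 => x; rewrite /= in_itv /= => /andP[x0 x1].
  by rewrite lee_fin mulr_ge0 ?(ltW x0) ?g0 ?x0.
apply: ge0_le_integral => //.
- move=> x; rewrite /= in_itv /= => /andP[x0 x1].
  by rewrite lee_fin mulr_ge0 ?(ltW x0) ?g0 ?x0.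
- apply/measurable_realfun.measurable_EFinP.
  exact: measurable_realfun.measurable_funM.
- exact/measurable_realfun.measurable_EFinP.
- move=> x; rewrite /= in_itv /= => /andP[x0 x1].
  by rewrite lee_fin ler_piMl ?g0 ?x0 ?(ltW x1).
Qed.

Lemma beta_dens_posterior k (h : history k) a (x : R) : 0 < x < 1 ->
  beta_dens (S_par R h a) (F_par R h a) x = prior_dens x * likelihood h a x.
Proof.
move=> /andP[x0 x1]; have y0 : 0 < 1 - x by rewrite subr_gt0.
have shift (n : nat) : 2^-1 + n%:R - 1 = - 2^-1 + n%:R :> R by lra.
rewrite /beta_dens /S_par /F_par !shift !powRD ?(gt_eqF x0) ?(gt_eqF y0) ?implybT //.
by rewrite !powR_mulrn ?(ltW x0) ?(ltW y0) // /prior_dens /likelihood; ring.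
Qed.

Lemma sdts_sample_probE k (h : history k) a :
  sdts_sample_prob R h a = post_pred R h a.
Proof.
congr (_ / _); apply: eq_Rintegral => x; rewrite inE /= in_itv /= => x01.
  by rewrite beta_dens_posterior.
exact: beta_dens_posterior.
Qed.

Lemma sdts_sample_prob01 k (h : history k) a :
  0 <= sdts_sample_prob R h a <= 1.
Proof.
apply: moment_ratio01; first exact: measurable_beta_dens.
by move=> x _; rewrite /beta_dens mulr_ge0 ?powR_ge0.
Qed.

Lemma sdts_piE k (h : history k) i :
  sdts_pi R h i = play_prob (sdts_sample_prob R h) i.
Proof. by []. Qed.

End PosteriorPredictive.

Theorem theorem3p1 (R : realType) (k : nat) (h : history k) (i j : 'I_k) :
  tv_bern (sdts_pi R h i) (sdts_pi R h j)
    <= 2 * tv_bern (post_pred R h i) (post_pred R h j).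
Proof.
rewrite !tv_bernE !sdts_piE -!sdts_sample_probE.
apply: le_trans (play_prob_lipschitz (sdts_sample_prob01 R h) i j) _.
by rewrite ler_peMl // ler1n.
Qed.
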